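(* If $(G,\tau)$ is a metrizable totally bounded Hausdorff topological group, then $(G,\mathcal{S}_\tau)$ is $mu$-bounded.
   Context: $\mathcal{S}_\tau$ is the smallest group ideal on $G$ containing every set $\{x\}\cup\{x_n:n\in\omega\}$ with $x_n\to x$ in $(G,\tau)$. A group ideal on $G$ is a family of subsets containing all finite subsets, closed under subsets and under $(A,B)\mapsto AB^{-1}$; it defines the coarse structure on $G$ with base $\{\{(x,y):x\in Ay\}:A\in\mathcal{I}\}$. For an entourage $E$, $E[x]=\{y:(x,y)\in E\}$. A function $f:(X,\mathcal{E})\to\mathbb{R}$ is macro-uniform if for every $E\in\mathcal{E}$, $\sup_{x\in X}\operatorname{diam} f(E[x])<\infty$. A coarse space is $mu$-bounded if every macro-uniform function on it is bounded. *)

From Stdlib Require Import Reals List.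
Open Scope R_scope.

Record Group := {
  carrier :> Type;
  gmul : carrier -> carrier -> carrier;
  ginv : carrier -> carrier;
  gone : carrier;
  gmul_assoc : forall x y z, gmul x (gmul y z) = gmul (gmul x y) z;
  gmul_one_l : forall x, gmul gone x = x;
  gmul_one_r : forall x, gmul x gone = x;
  gmul_inv_l : forall x, gmul (ginv x) x = gone;
  gmul_inv_r : forall x, gmul x (ginv x) = gone
}.

Definition subset {T : Type} (A B : T -> Prop) := forall x, A x -> B x.

Definition finite_set {T : Type} (A : T -> Prop) : Prop :=
  exists l : list T, forall x, A x -> In x l.

Definition is_topology {T : Type} (opens : (T -> Prop) -> Prop) : Prop :=
  opens (fun _ => True) /\
  (forall (F : (T -> Prop) -> Prop), (forall U, F U -> opens U) ->
      opens (fun x => exists U, F U /\ U x)) /\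
  (forall U V, opens U -> opens V -> opens (fun x => U x /\ V x)).

Definition topological_group (G : Group) (tau : (G -> Prop) -> Prop) : Prop :=
  is_topology tau /\
  (forall x y (W : G -> Prop), tau W -> W (gmul G x y) ->
     exists U V, tau U /\ tau V /\ U x /\ V y /\
       (forall u v, U u -> V v -> W (gmul G u v))) /\
  (forall x (W : G -> Prop), tau W -> W (ginv G x) ->
     exists U, tau U /\ U x /\ (forall u, U u -> W (ginv G u))).

Definition hausdorff {T : Type} (tau : (T -> Prop) -> Prop) : Prop :=
  forall x y, x <> y -> exists U V, tau U /\ tau V /\ U x /\ V y /\
    (forall z, U z -> V z -> False).

Definition is_metric {T : Type} (d : T -> T -> R) : Prop :=
  (forall x y, 0 <= d x y) /\ (forall x y, d x y = 0 <-> x = y) /\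
  (forall x y, d x y = d y x) /\ (forall x y z, d x z <= d x y + d y z).

Definition metrizable {T : Type} (tau : (T -> Prop) -> Prop) : Prop :=
  exists d : T -> T -> R, is_metric d /\
    forall U, tau U <-> (forall x, U x -> exists r, 0 < r /\
                           forall y, d x y < r -> U y).

Definition totally_bounded (G : Group) (tau : (G -> Prop) -> Prop) : Prop :=
  forall U : G -> Prop, tau U -> U (gone G) ->
    exists F : list G, forall g, exists f u, In f F /\ U u /\ g = gmul G f u.

Definition converges {T : Type} (tau : (T -> Prop) -> Prop) (s : nat -> T) (x : T) :=
  forall U, tau U -> U x -> exists N, forall n, (N <= n)%nat -> U (s n).

Definition set_mul_inv (G : Group) (A B : G -> Prop) : G -> Prop :=
  fun z => exists a b, A a /\ B b /\ z = gmul G a (ginv G b).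

Definition group_ideal (G : Group) (I : (G -> Prop) -> Prop) : Prop :=
  (forall A, finite_set A -> I A) /\
  (forall A B, I A -> subset B A -> I B) /\
  (forall A B, I A -> I B -> I (set_mul_inv G A B)).

Definition S_tau (G : Group) (tau : (G -> Prop) -> Prop) (A : G -> Prop) : Prop :=
  forall I, group_ideal G I ->
    (forall (s : nat -> G) (x : G), converges tau s x ->
        I (fun z => z = x \/ exists n, z = s n)) ->
    I A.

(** Coarse structure of a group ideal: subsets of basic entourages
    {(x,y) : x \in A y}, A in I. *)
Definition ideal_entourage (G : Group) (I : (G -> Prop) -> Prop)
    (E : G -> G -> Prop) : Prop :=
  exists A, I A /\ forall x y, E x y -> exists a, A a /\ x = gmul G a y.

Definition macro_uniform {X : Type} (ent : (X -> X -> Prop) -> Prop)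
    (f : X -> R) : Prop :=
  forall E, ent E -> exists C : R, forall x y z, E x y -> E x z ->
    Rabs (f y - f z) <= C.

Definition mu_bounded {X : Type} (ent : (X -> X -> Prop) -> Prop) : Prop :=
  forall f : X -> R, macro_uniform ent f -> exists C : R, forall x, Rabs (f x) <= C.

(* Suppose f is macro-uniform but unbounded. Total boundedness covers G by
   finitely many sets that are small in the sense that y x^-1 is close to the
   identity for any two of their points, and f stays unbounded on one of them.
   Iterating with finer and finer covers yields g_0, g_1, ... with
   z_n := g_(n+1) g_n^-1 -> 1 and |f g_(n+1)| - |f g_n| -> oo. But
   {1} u {z_n : n} lies in S_tau, and g_n, g_(n+1) both lie in E[g_(n+1)] for
   the corresponding entourage E, so |f g_(n+1) - f g_n| is bounded. *)
From Stdlib Require Import Reals List Lra Classical ClassicalEpsilon.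
Open Scope R_scope.

Lemma ginv_unique (G : Group) (a b : G) : gmul G a b = gone G -> b = ginv G a.
Proof.
  intro Hab.
  rewrite <- (gmul_one_l G b), <- (gmul_inv_l G a), <- gmul_assoc, Hab.
  apply gmul_one_r.
Qed.

Lemma ginv_one (G : Group) : ginv G (gone G) = gone G.
Proof. symmetry; apply ginv_unique, gmul_one_l. Qed.

Lemma ginv_involutive (G : Group) (a : G) : ginv G (ginv G a) = a.
Proof. symmetry; apply ginv_unique, gmul_inv_l. Qed.

Lemma ginv_mul (G : Group) (a b : G) :
  ginv G (gmul G a b) = gmul G (ginv G b) (ginv G a).
Proof.
  symmetry; apply ginv_unique.
  rewrite <- gmul_assoc, (gmul_assoc G b), gmul_inv_r, gmul_one_l, gmul_inv_r.
  reflexivity.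
Qed.

Lemma gmul_inv_cancel_r (G : Group) (a b : G) : gmul G (gmul G a (ginv G b)) b = a.
Proof. rewrite <- gmul_assoc, gmul_inv_l, gmul_one_r; reflexivity. Qed.

Lemma nat_dependent_choice {A : Type} (P : nat -> A -> Prop)
    (Rel : nat -> A -> A -> Prop) :
  (exists a, P 0%nat a) ->
  (forall n a, P n a -> exists b, P (S n) b /\ Rel n a b) ->
  exists s : nat -> A, forall n, P n (s n) /\ Rel n (s n) (s (S n)).
Proof.
  intros [a0 Ha0] Hstep.
  pose (next := fun n (a : {a | P n a}) =>
    constructive_indefinite_description _ (Hstep n _ (proj2_sig a))).
  pose (s := fix s (n : nat) : {a | P n a} :=
    match n as m return {a | P m a} with
    | O => exist _ a0 Ha0
    | S k => exist _ (proj1_sig (next k (s k))) (proj1 (proj2_sig (next k (s k))))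
    end).
  exists (fun n => proj1_sig (s n)); intro n; split.
  - exact (proj2_sig (s n)).
  - exact (proj2 (proj2_sig (next n (s n)))).
Qed.

Definition unbounded_on {T : Type} (f : T -> R) (D : T -> Prop) : Prop :=
  forall M, exists x, D x /\ M < Rabs (f x).

Lemma not_bounded_unbounded_on {T : Type} (f : T -> R) :
  ~ (exists C, forall x, Rabs (f x) <= C) -> unbounded_on f (fun _ => True).
Proof.
  intros Hnb M; apply NNPP; intro HM; apply Hnb.
  exists M; intro x; apply Rnot_lt_le; intro Hlt; apply HM.
  exists x; split; [exact I | exact Hlt].
Qed.

Lemma unbounded_on_finite_cover {T I : Type} (f : T -> R) (P : I -> T -> Prop)
    (l : list I) (D : T -> Prop) :
  unbounded_on f D -> (forall x, D x -> exists c, In c l /\ P c x) ->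
  exists c, unbounded_on f (fun x => D x /\ P c x).
Proof.
  revert D; induction l as [|a l IH]; intros D HD Hcover.
  - destruct (HD 0) as [x [Hx _]]; destruct (Hcover x Hx) as [c [[] _]].
  - destruct (classic (unbounded_on f (fun x => D x /\ P a x))) as [Ha|Ha].
    { exists a; exact Ha. }
    assert (HM : exists M, forall x, D x -> P a x -> Rabs (f x) <= M).
    { apply NNPP; intro HN; apply Ha; intro M; apply NNPP; intro HM; apply HN.
      exists M; intros x Hx Hp; apply Rnot_lt_le; intro Hlt; apply HM; eauto. }
    destruct HM as [M HM].
    destruct (IH (fun x => D x /\ ~ P a x)) as [c Hc].
    + intro M'; destruct (HD (Rmax M M')) as [x [Hx Hfx]].
      exists x; split; [split; [exact Hx|] |].
      * intro Hp; pose proof (HM x Hx Hp); pose proof (Rmax_l M M'); lra.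
      * pose proof (Rmax_r M M'); lra.
    + intros x [Hx Hnp]; destruct (Hcover x Hx) as [c [[<-|Hin] Hp]];
        [contradiction | eauto].
    + exists c; intro M'; destruct (Hc M') as [x [[[Hx _] Hp] Hfx]]; eauto.
Qed.

Lemma metric_ball_open {T : Type} (tau : (T -> Prop) -> Prop) (d : T -> T -> R) :
  is_metric d ->
  (forall U, tau U <-> (forall x, U x -> exists r, 0 < r /\ forall y, d x y < r -> U y)) ->
  forall x r, tau (fun y => d x y < r).
Proof.
  intros [_ [_ [_ Htri]]] Htau x r; apply Htau; intros y Hy.
  exists (r - d x y); split; [lra|]; intros z Hz; pose proof (Htri x y z); lra.
Qed.

Lemma metric_converges {T : Type} (tau : (T -> Prop) -> Prop) (d : T -> T -> R)
    (s : nat -> T) (x : T) :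
  (forall U, tau U <-> (forall x, U x -> exists r, 0 < r /\ forall y, d x y < r -> U y)) ->
  (forall n, d x (s n) < / (INR n + 1)) -> converges tau s x.
Proof.
  intros Htau Hs U HU HUx.
  destruct (proj1 (Htau U) HU x HUx) as [r [Hr Hball]].
  destruct (INR_unbounded (/ r)) as [N HN].
  exists N; intros n Hn; apply Hball.
  apply le_INR in Hn; pose proof (pos_INR N).
  apply Rlt_le_trans with (/ (INR n + 1)); [apply Hs|].
  apply Rle_trans with (/ (INR N + 1)); [apply Rinv_le_contravar; lra|].
  rewrite <- (Rinv_inv r); apply Rlt_le, Rinv_lt_contravar.
  - apply Rmult_lt_0_compat; [apply Rinv_0_lt_compat|]; lra.
  - lra.
Qed.

Lemma macro_uniform_converging_jump (G : Group) (tau : (G -> Prop) -> Prop)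
    (f : G -> R) (z : nat -> G) :
  macro_uniform (ideal_entourage G (S_tau G tau)) f ->
  converges tau z (gone G) ->
  exists C, forall n y, Rabs (f y - f (gmul G (z n) y)) <= C.
Proof.
  intros Hf Hz.
  pose (A := fun a => a = gone G \/ exists n, a = z n).
  destruct (Hf (fun x y => exists a, A a /\ x = gmul G a y)) as [C HC].
  { exists A; split; [intros I _ HI; exact (HI z _ Hz) | intros x y Hxy; exact Hxy]. }
  exists C; intros n y; apply (HC (gmul G (z n) y)).
  - exists (z n); split; [right; exists n|]; reflexivity.
  - exists (gone G); split; [left; reflexivity | symmetry; apply gmul_one_l].
Qed.

Section SmallCells.

Variables (G : Group) (tau : (G -> Prop) -> Prop) (d : G -> G -> R).
Hypotheses (Htg : topological_group G tau) (Hd : is_metric d)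
  (Htau : forall U, tau U <->
     (forall x, U x -> exists r, 0 < r /\ forall y, d x y < r -> U y))
  (Htb : totally_bounded G tau).

Definition small (r : R) (D : G -> Prop) : Prop :=
  forall x y, D x -> D y -> d (gone G) (gmul G y (ginv G x)) < r.

(* The cells are the sets {g | g^-1 in c W}, with W a neighbourhood of 1
   such that W^-1 W lies in the r-ball around 1. *)
Lemma small_finite_cover (r : R) : 0 < r ->
  exists (F : list G) (P : G -> G -> Prop),
    (forall g, exists c, In c F /\ P c g) /\ forall c, small r (P c).
Proof.
  destruct Htg as [Htop [Hmul Hinv]]; intro Hr.
  assert (Hone : d (gone G) (gmul G (gone G) (gone G)) < r).
  { rewrite gmul_one_l, (proj2 (proj1 (proj2 Hd) _ _) eq_refl); exact Hr. }
  destruct (Hmul _ _ _ (metric_ball_open tau d Hd Htau (gone G) r) Hone)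
    as [U [V [HU [HV [HU1 [HV1 HUV]]]]]].
  rewrite <- ginv_one in HU1.
  destruct (Hinv _ _ HU HU1) as [U' [HU' [HU'1 HU'inv]]].
  pose (W := fun x => U' x /\ V x).
  destruct (Htb W (proj2 (proj2 Htop) _ _ HU' HV) (conj HU'1 HV1)) as [F HF].
  exists F, (fun c g => exists u, W u /\ ginv G g = gmul G c u); split.
  - intro g; destruct (HF (ginv G g)) as [c [u [Hc [Hu Heq]]]]; eauto.
  - intros c x y [u [Hu Hx]] [u' [Hu' Hy]].
    rewrite <- (ginv_involutive G y), Hy, Hx, ginv_mul, gmul_assoc,
      <- (gmul_assoc G (ginv G u')), gmul_inv_l, gmul_one_r.
    apply HUV; [apply HU'inv, Hu' | apply Hu].
Qed.

Lemma unbounded_on_small_subset (f : G -> R) (D : G -> Prop) (r : R) :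
  0 < r -> unbounded_on f D ->
  exists D', subset D' D /\ unbounded_on f D' /\ small r D'.
Proof.
  intros Hr HD; destruct (small_finite_cover r Hr) as [F [P [HF HP]]].
  destruct (unbounded_on_finite_cover f P F D HD (fun g _ => HF g)) as [c Hc].
  exists (fun x => D x /\ P c x); split; [intros x []; assumption|].
  split; [exact Hc|]; intros x y [_ Hx] [_ Hy]; exact (HP c x y Hx Hy).
Qed.

Lemma unbounded_small_steps (f : G -> R) :
  unbounded_on f (fun _ => True) ->
  exists g : nat -> G, forall n,
    d (gone G) (gmul G (g (S n)) (ginv G (g n))) < / (INR n + 1) /\
    Rabs (f (g n)) + INR n + 1 < Rabs (f (g (S n))).
Proof.
  intro Hf.
  assert (Hpos : forall n, 0 < / (INR n + 1)).
  { intro n; apply Rinv_0_lt_compat; pose proof (pos_INR n); lra. }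
  pose (Good := fun n (p : (G -> Prop) * G) =>
    unbounded_on f (fst p) /\ small (/ (INR n + 1)) (fst p) /\ fst p (snd p)).
  pose (Next := fun n (p p' : (G -> Prop) * G) =>
    subset (fst p') (fst p) /\ Rabs (f (snd p)) + INR n + 1 < Rabs (f (snd p'))).
  destruct (nat_dependent_choice Good Next) as [s Hs].
  - destruct (unbounded_on_small_subset f _ _ (Hpos 0%nat) Hf)
      as [D [_ [HD Hsmall]]].
    destruct (HD 0) as [x [Hx _]]; exists (D, x); repeat split; assumption.
  - intros n [D x] [HD [_ Hx]].
    destruct (unbounded_on_small_subset f D _ (Hpos (S n)) HD)
      as [D' [HD'D [HD' Hsmall]]].
    destruct (HD' (Rabs (f x) + INR n + 1)) as [x' [Hx' Hfx']].
    exists (D', x'); repeat split; assumption.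
  - exists (fun n => snd (s n)); intro n.
    destruct (Hs n) as [[_ [Hsmall Hx]] [Hsub Hjump]].
    destruct (Hs (S n)) as [[_ [_ Hx']] _].
    split; [apply Hsmall; [exact Hx | apply Hsub, Hx'] | exact Hjump].
Qed.

End SmallCells.

Theorem theorem10 (G : Group) (tau : (G -> Prop) -> Prop) :
  topological_group G tau -> metrizable tau -> totally_bounded G tau ->
  hausdorff tau ->
  mu_bounded (ideal_entourage G (S_tau G tau)).
Proof.
  intros Htg [d [Hd Htau]] Htb _ f Hf.
  apply NNPP; intro Hnb.
  destruct (unbounded_small_steps G tau d Htg Hd Htau Htb f
              (not_bounded_unbounded_on f Hnb)) as [g Hg].
  pose (z := fun n => gmul G (g (S n)) (ginv G (g n))).
  assert (Hz : converges tau z (gone G)).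
  { apply (metric_converges tau d z _ Htau); intro n; apply Hg. }
  destruct (macro_uniform_converging_jump G tau f z Hf Hz) as [C HC].
  destruct (INR_unbounded C) as [n Hn].
  pose proof (HC n (g n)) as Hjump; unfold z in Hjump.
  rewrite gmul_inv_cancel_r in Hjump.
  destruct (Hg n) as [_ Hgrow].
  pose proof (Rabs_triang_inv (f (g (S n))) (f (g n))).
  rewrite Rabs_minus_sym in Hjump; lra.
Qed.
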